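(* Let $M$ be a perfect matching for a self-contained finite bipartite graph $\mathcal{B}=\langle V,F,E\rangle$. Let $S_V^{(1)},\dots,S_V^{(n)}$ be a topological ordering of the strongly connected components of the directed graph $\mathcal{G}(\mathcal{B},M)_{\mathrm{mar}(F)}$, and for $i=1,\dots,n$ let $\mathcal{B}^{(i)}$ be the subgraph of $\mathcal{B}$ induced by $\bigcup_{j=i}^{n}(S_V^{(j)}\cup M(S_V^{(j)}))$. Then $\mathcal{B}^{(i)}$ is self-contained and $M(S_V^{(i)})$ is a minimal self-contained set in $\mathcal{B}^{(i)}$.
   Context: $\mathrm{adj}_{\mathcal{B}}(X)$ is the set of vertices adjacent to some vertex of $X$. A set $F'\subseteq F$ is self-contained in $\mathcal{B}$ if $|F'|=|\mathrm{adj}_{\mathcal{B}}(F')|$ and $|F''|\le|\mathrm{adj}_{\mathcal{B}}(F'')|$ for all $F''\subseteq F'$; a bipartite graph is self-contained if both its sides have equal size and its constraint side is self-contained; a non-empty self-contained set is minimal self-contained if no non-empty strict subset is self-contained. For a matching $M$ and vertex set $X$, $M(X)$ is the set of vertices matched to vertices of $X$. $\mathcal{G}(\mathcal{B},M)$ is the directed graph on $V\cup F$ with, for each $(v-f)\in E$, the edge $f\to v$ if $(v-f)\in M$ and $v\to f$ otherwise. $\mathcal{G}(\mathcal{B},M)_{\mathrm{mar}(F)}$ is the graph on $V$ with $x\to y$ iff $\mathcal{G}(\mathcal{B},M)$ has a directed path from $x$ to $y$ whose intermediate vertices all lie in $F$. A topological ordering of the strongly connected components means an ordering such that every edge between two distinct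 components goes from an earlier to a later component. *)

From Stdlib Require Import Relations.
From mathcomp Require Import all_boot.
Set Implicit Arguments. Unset Strict Implicit. Unset Printing Implicit Defensive.

(* Induced subgraphs are described by vertex subsets VS : {set V}, FS : {set F}
   (edges of the subgraph = edges of B between them). *)
Section Bip.
Variables (V F : finType) (E : V -> F -> bool).

Definition adjF (VS : {set V}) (X : {set F}) : {set V} :=
  [set v in VS | [exists f in X, E v f]].

Definition self_contained_set (VS : {set V}) (FS : {set F}) (F' : {set F}) : Prop :=
  F' \subset FS /\
  #|F'| = #|adjF VS F'| /\
  (forall F'' : {set F}, F'' \subset F' -> #|F''| <= #|adjF VS F''|).

Definition self_contained_graph (VS : {set V}) (FS : {set F}) : Prop :=
  #|VS| = #|FS| /\ self_contained_set VS FS FS.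

Definition minimal_self_contained (VS : {set V}) (FS : {set F}) (F' : {set F}) : Prop :=
  F' != set0 /\ self_contained_set VS FS F' /\
  (forall F'' : {set F}, F'' != set0 -> F'' \proper F' ->
     ~ self_contained_set VS FS F'').

Definition is_matching (M : {set V * F}) : Prop :=
  (forall e, e \in M -> E e.1 e.2) /\
  (forall e1 e2, e1 \in M -> e2 \in M -> e1.1 = e2.1 -> e1 = e2) /\
  (forall e1 e2, e1 \in M -> e2 \in M -> e1.2 = e2.2 -> e1 = e2).

Definition is_perfect_matching (M : {set V * F}) : Prop :=
  is_matching M /\
  (forall v : V, exists f : F, (v, f) \in M) /\
  (forall f : F, exists v : V, (v, f) \in M).

Definition matchedV (M : {set V * F}) (X : {set V}) : {set F} :=
  [set f | [exists v in X, (v, f) \in M]].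

Definition GBM (M : {set V * F}) : rel (V + F) :=
  fun a b => match a, b with
  | inl v, inr f => E v f && ((v, f) \notin M)
  | inr f, inl v => (v, f) \in M
  | _, _ => false
  end.

(* G(B,M)_{mar(F)}: x -> y iff there is a directed path x, f_1, ..., f_k, y
   in G(B,M) all of whose intermediate vertices f_i lie in F. *)
Definition GBM_marF (M : {set V * F}) (x y : V) : Prop :=
  exists fs : seq F, path (GBM M) (inl x) (rcons (map inr fs) (inl y)).

Definition marF_reach (M : {set V * F}) : V -> V -> Prop :=
  clos_refl_trans V (GBM_marF M).

Definition is_scc (M : {set V * F}) (C : {set V}) : Prop :=
  exists x : V, forall y : V,
    y \in C <-> (marF_reach M x y /\ marF_reach M y x).

Definition scc_topological_ordering (M : {set V * F}) (n : nat)
    (S : 'I_n -> {set V}) : Prop :=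
  injective S /\
  (forall C : {set V}, is_scc M C <-> exists i : 'I_n, S i = C) /\
  (forall (i j : 'I_n) (x y : V), x \in S i -> y \in S j ->
     GBM_marF M x y -> i != j -> i < j).
End Bip.

From Stdlib Require Import Relations.
From mathcomp Require Import all_boot.
Set Implicit Arguments. Unset Strict Implicit. Unset Printing Implicit Defensive.

(* A perfect matching is a bijection [mateV : V -> F] with inverse [mateF],
   and [mateF] maps any set of constraints F'' into adj(F''); hence
   |F''| <= |adj F''| always holds, M(X) is self-contained as soon as
   adj(M(X)) stays inside X, and a self-contained F'' has adj F'' = mateF(F'').
   In the tail V_i, the set M(S_i) is closed because an edge v - M(y) with
   y in S_i and v in a later component would be a backward edge v -> y of the
   topological ordering. A nonempty proper self-contained F'' of M(S_i) would
   give a nonempty proper subset X = mateF(F'') = adj(F'') of S_i; strong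
   connectivity of S_i provides an edge u -> v leaving S_i \ X into X, that
   is, u adjacent to M(v) in F'', so u lies in X after all. *)

Lemma clos_rt_exit (T : Type) (R : relation T) (X : pred T) x y :
  clos_refl_trans T R x y -> ~~ X x -> X y ->
  exists u v, [/\ clos_refl_trans T R x u, R u v, ~~ X u & X v].
Proof.
move=> xy; elim: {xy}(clos_rt_rt1n _ _ _ _ xy) => [z|z z' w Rzz' _ IH] nXz Xw.
  by rewrite Xw in nXz.
have [Xz'|nXz'] := boolP (X z'); first by exists z, z'; split=> //; apply: rt_refl.
have [u [v [z'u Ruv nXu Xv]]] := IH nXz' Xw.
by exists u, v; split=> //; apply: rt_trans (rt_step _ _ _ _ Rzz') z'u.
Qed.

Section Components.
Variables (V F : finType) (E : V -> F -> bool) (M : {set V * F}).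

Lemma scc_nonempty (C : {set V}) : is_scc E M C -> C != set0.
Proof. by case=> c Hc; apply/set0Pn; exists c; apply/Hc; split; apply: rt_refl. Qed.

Lemma scc_reach (C : {set V}) x y :
  is_scc E M C -> x \in C -> y \in C -> marF_reach E M x y.
Proof. by case=> c Hc /Hc[_ xc] /Hc[cy _]; apply: rt_trans xc cy. Qed.

Lemma scc_between (C : {set V}) x u y :
  is_scc E M C -> x \in C -> y \in C ->
  marF_reach E M x u -> marF_reach E M u y -> u \in C.
Proof.
case=> c Hc /Hc[cx _] /Hc[_ yc] xu uy.
by apply/Hc; split; [apply: rt_trans cx xu | apply: rt_trans uy yc].
Qed.

Lemma scc_exit (C X : {set V}) :
  is_scc E M C -> X \proper C -> X != set0 ->
  exists u v, [/\ u \in C, u \notin X, v \in X & GBM_marF E M u v].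
Proof.
move=> sccC /properP[XC [x xC xX]] /set0Pn[y yX].
have [u [v [xu uv uX vX]]] :=
  clos_rt_exit (X := fun w => w \in X) (scc_reach sccC xC (subsetP XC y yX)) xX yX.
exists u, v; split=> //.
exact: scc_between sccC xC (subsetP XC v vX) xu (rt_step _ _ _ _ uv).
Qed.

Lemma topological_edge_back n (S : 'I_n -> {set V}) (i j : 'I_n) x y :
  scc_topological_ordering E M S -> x \in S j -> y \in S i ->
  GBM_marF E M x y -> i <= j -> j = i.
Proof.
case=> _ [_ ord] xS yS xy ij; apply/eqP; apply: contraTT ij => ji.
by rewrite -ltnNge; apply: ord xS yS xy ji.
Qed.

End Components.

Section PerfectMatching.
Variables (V F : finType) (E : V -> F -> bool) (M : {set V * F}).
Hypothesis HM : is_perfect_matching E M.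

Definition mateV (v : V) : F := xchoose (HM.2.1 v).
Definition mateF (f : F) : V := xchoose (HM.2.2 f).

Lemma mateV_in v : (v, mateV v) \in M. Proof. exact: (xchooseP (HM.2.1 v)). Qed.
Lemma mateF_in f : (mateF f, f) \in M. Proof. exact: (xchooseP (HM.2.2 f)). Qed.

Lemma mateV_eq v f : (v, f) \in M -> mateV v = f.
Proof. by case: HM => [[_ [inj _]] _] vf; case: (inj _ _ (mateV_in v) vf erefl). Qed.

Lemma mateF_eq v f : (v, f) \in M -> mateF f = v.
Proof. by case: HM => [[_ [_ inj]] _] vf; case: (inj _ _ (mateF_in f) vf erefl). Qed.

Lemma mateVK : cancel mateV mateF. Proof. by move=> v; apply/mateF_eq/mateV_in. Qed.
Lemma mateFK : cancel mateF mateV. Proof. by move=> f; apply/mateV_eq/mateF_in. Qed.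

Lemma mateV_inj : injective mateV. Proof. exact: can_inj mateVK. Qed.
Lemma mateF_inj : injective mateF. Proof. exact: can_inj mateFK. Qed.

Lemma mateF_imset_mateV (X : {set V}) : mateF @: (mateV @: X) = X.
Proof. by rewrite -imset_comp (eq_imset _ mateVK) imset_id. Qed.

Lemma edge_mateV v : E v (mateV v).
Proof. by case: HM => [[edge _] _]; apply: (edge (v, _)) (mateV_in v). Qed.

Lemma matchedVE (X : {set V}) : matchedV M X = mateV @: X.
Proof.
apply/setP=> f; rewrite inE; apply/existsP/imsetP.
- by case=> v /andP[vX /mateV_eq <-]; exists v.
- by case=> v vX ->; exists v; rewrite vX mateV_in.
Qed.

Lemma matchedV_bigcup (I : finType) (P : pred I) (S : I -> {set V}) :
  \bigcup_(j | P j) matchedV M (S j) = mateV @: \bigcup_(j | P j) S j.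
Proof.
rewrite (big_morph _ (imsetU mateV) (imset0 mateV)).
by apply: eq_bigr => j _; apply: matchedVE.
Qed.

Lemma mateF_sub_adjF (VS : {set V}) (F'' : {set F}) :
  F'' \subset mateV @: VS -> mateF @: F'' \subset adjF E VS F''.
Proof.
move=> F''VS; apply/subsetP=> _ /imsetP[f fF ->].
have /imsetP[v vVS fE] := subsetP F''VS f fF; subst f.
by rewrite inE mateVK vVS /=; apply/existsP; exists (mateV v); rewrite fF edge_mateV.
Qed.

Lemma card_le_adjF (VS : {set V}) (F'' : {set F}) :
  F'' \subset mateV @: VS -> #|F''| <= #|adjF E VS F''|.
Proof.
move=> F''VS; rewrite -(card_imset _ mateF_inj).
exact/subset_leq_card/mateF_sub_adjF.
Qed.

Lemma self_contained_image (VS X : {set V}) (FS : {set F}) :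
  X \subset VS -> mateV @: X \subset FS -> adjF E VS (mateV @: X) \subset X ->
  self_contained_set E VS FS (mateV @: X).
Proof.
move=> XVS XFS closedX; have XVS' := imsetS mateV XVS.
split=> //; split; last first.
  by move=> F'' F''X; apply: card_le_adjF (subset_trans F''X XVS').
apply/eqP; rewrite eqn_leq card_le_adjF //= card_imset ?subset_leq_card //.
exact: mateV_inj.
Qed.

Lemma self_contained_graph_image (VS : {set V}) :
  self_contained_graph E VS (mateV @: VS).
Proof.
split; first by rewrite card_imset //; apply: mateV_inj.
by apply: self_contained_image => //; apply/subsetP=> v /setIdP[].
Qed.

Lemma adjF_self_contained (VS : {set V}) (FS F'' : {set F}) :
  F'' \subset mateV @: VS -> self_contained_set E VS FS F'' ->
  adjF E VS F'' = mateF @: F''.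
Proof.
move=> F''VS [_ [card_adj _]]; apply/esym/eqP.
by rewrite eqEcard mateF_sub_adjF //= -card_adj card_imset //; apply: mateF_inj.
Qed.

Lemma GBM_marF_mateV u v : GBM_marF E M u v -> E u (mateV v).
Proof.
case=> -[|f [|f' fs]] /=; rewrite ?andbF //.
by case/andP=> /andP[Euf _] /andP[/mateV_eq-> _].
Qed.

Lemma GBM_marF_edge u v : E u (mateV v) -> u != v -> GBM_marF E M u v.
Proof.
move=> Euv nuv; exists [:: mateV v]; rewrite /= Euv mateV_in !andbT /=.
by apply: contra nuv => /mateF_eq; rewrite mateVK => ->.
Qed.

Lemma adjF_tail_component n (S : 'I_n -> {set V}) (i : 'I_n) :
  scc_topological_ordering E M S ->
  adjF E (\bigcup_(j : 'I_n | i <= j) S j) (mateV @: S i) \subset S i.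
Proof.
move=> ord; apply/subsetP=> v /setIdP[/bigcupP[j ij vSj]].
case/existsP=> _ /andP[/imsetP[y yS ->] Evy].
have [-> //|nvy] := eqVneq v y.
by rewrite -(topological_edge_back ord vSj yS (GBM_marF_edge Evy nvy) ij).
Qed.

Lemma scc_no_proper_self_contained (VS C : {set V}) (FS F'' : {set F}) :
  is_scc E M C -> C \subset VS -> F'' != set0 -> F'' \proper mateV @: C ->
  ~ self_contained_set E VS FS F''.
Proof.
move=> sccC CVS nzF F''C scF.
have F''VS : F'' \subset mateV @: VS := subset_trans (proper_sub F''C) (imsetS _ CVS).
have XC : mateF @: F'' \proper C.
  by rewrite -[C]mateF_imset_mateV; apply: imset_proper F''C => ? ? _ _; apply: mateF_inj.
have [|u [v [uC uX vX uv]]] := scc_exit sccC XC; first by rewrite imset_eq0.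
apply: (negP uX); rewrite -(adjF_self_contained F''VS scF) inE (subsetP CVS _ uC).
apply/existsP; exists (mateV v); rewrite GBM_marF_mateV // andbT.
by case/imsetP: vX => f fF ->; rewrite mateFK.
Qed.

Lemma minimal_self_contained_scc (VS C : {set V}) (FS : {set F}) :
  is_scc E M C -> C \subset VS -> mateV @: C \subset FS ->
  adjF E VS (mateV @: C) \subset C ->
  minimal_self_contained E VS FS (mateV @: C).
Proof.
move=> sccC CVS CFS closedC; split; last split.
- by rewrite imset_eq0; apply: scc_nonempty sccC.
- exact: self_contained_image.
- by move=> F'' nzF F''C; apply: scc_no_proper_self_contained sccC CVS nzF F''C.
Qed.

End PerfectMatching.

Theorem lemma40 (V F : finType) (E : V -> F -> bool) (M : {set V * F})
    (n : nat) (S : 'I_n -> {set V}) :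
  self_contained_graph E [set: V] [set: F] ->
  is_perfect_matching E M ->
  scc_topological_ordering E M S ->
  forall i : 'I_n,
    let Vi := \bigcup_(j : 'I_n | i <= j) S j in
    let Fi := \bigcup_(j : 'I_n | i <= j) matchedV M (S j) in
    self_contained_graph E Vi Fi /\
    minimal_self_contained E Vi Fi (matchedV M (S i)).
Proof.
(* Self-containedness of B is implied by the perfect matching. *)
move=> _ HM ord i Vi Fi.
have FiE : Fi = mateV HM @: Vi := matchedV_bigcup HM _ S.
have SiVi : S i \subset Vi := bigcup_sup i (leqnn i).
have sccSi : is_scc E M (S i) by case: ord => _ [sccS _]; apply/sccS; exists i.
rewrite FiE (matchedVE HM); split; first exact: self_contained_graph_image.
apply: minimal_self_contained_scc => //; first exact: imsetS.
exact: adjF_tail_component.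
Qed.
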